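(* Let $r>0$ and $\overline T>0$. For $\mathbf h,\mathbf g\in\mathbb R^3$ set $\mathbf v=\mathbf h+\frac{r}{1+r}\mathbf g$ and $\mathbf w=\sqrt r\,\mathbf h-\frac{\sqrt r}{1+r}\mathbf g$. Then for all multi-indices $\lambda=(l_1,l_2,l_3),\kappa=(k_1,k_2,k_3)\in\mathbb N^3$, $$H^{\mathbf 0,\overline T}_\lambda(\mathbf v)H^{\mathbf 0,\overline T}_\kappa(\mathbf w)=\sum_{\kappa'+\lambda'=\kappa+\lambda}c^{l_1k_1}_{l'_1k'_1}(r)\,c^{l_2k_2}_{l'_2k'_2}(r)\,c^{l_3k_3}_{l'_3k'_3}(r)\,H^{\mathbf 0,\overline T}_{\lambda'}\big(\sqrt{1+r}\,\mathbf h\big)H^{\mathbf 0,\overline T}_{\kappa'}\Big(\sqrt{\tfrac{r}{1+r}}\,\mathbf g\Big),$$ where the sum runs over $\kappa'=(k'_1,k'_2,k'_3),\lambda'=(l'_1,l'_2,l'_3)\in\mathbb N^3$ with $\kappa'+\lambda'=\kappa+\lambda$, and $$c^{l_dk_d}_{l'_dk'_d}(r)=(1+r)^{-\frac{l'_d+k'_d}{2}}\sum_{s\in\mathbb Z}C_{l_d}^{s}C_{k_d}^{l'_d-s}(-1)^{k_d-l'_d+s}r^{\frac{l_d+l'_d}{2}-s}.$$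
   Context: For $\mathbf u\in\mathbb R^3$, $T>0$, $\mathcal M_{\mathbf u,T}(\mathbf v)=(2\pi T)^{-3/2}\exp\!\big(-|\mathbf v-\mathbf u|^2/(2T)\big)$, and for $\alpha\in\mathbb N^3$ with $|\alpha|=\alpha_1+\alpha_2+\alpha_3$, the Hermite polynomial is $H^{\mathbf u,T}_\alpha(\mathbf v)=\frac{(-1)^{|\alpha|}T^{|\alpha|/2}}{\mathcal M_{\mathbf u,T}(\mathbf v)}\frac{\partial^{|\alpha|}}{\partial v_1^{\alpha_1}\partial v_2^{\alpha_2}\partial v_3^{\alpha_3}}\mathcal M_{\mathbf u,T}(\mathbf v)$. $C_n^k$ is the binomial coefficient, taken to be $0$ when $k<0$ or $k>n$. *)

From Stdlib Require Import Reals ZArith Lra Bool.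
From Coquelicot Require Import Coquelicot.
Open Scope R_scope.

Definition vec3 : Type := (R * R * R)%type.
Definition midx : Type := (nat * nat * nat)%type.

Definition v1 (v : vec3) : R := fst (fst v).
Definition v2 (v : vec3) : R := snd (fst v).
Definition v3 (v : vec3) : R := snd v.

Definition mk3 (a b c : R) : vec3 := (a, b, c).
Definition vadd (a b : vec3) : vec3 := mk3 (v1 a + v1 b) (v2 a + v2 b) (v3 a + v3 b).
Definition vscal (c : R) (a : vec3) : vec3 := mk3 (c * v1 a) (c * v2 a) (c * v3 a).
Definition vnorm2 (a : vec3) : R := v1 a ^ 2 + v2 a ^ 2 + v3 a ^ 2.

Definition a1 (a : midx) : nat := fst (fst a).
Definition a2 (a : midx) : nat := snd (fst a).
Definition a3 (a : midx) : nat := snd a.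
Definition mabs (a : midx) : nat := (a1 a + a2 a + a3 a)%nat.

Definition Maxw (u : vec3) (T : R) (v : vec3) : R :=
  Rpower (2 * PI * T) (- (3 / 2)) *
  exp (- vnorm2 (vadd v (vscal (-1) u)) / (2 * T)).

Definition dpart (f : vec3 -> R) (a : midx) (v : vec3) : R :=
  Derive_n (fun x1 =>
    Derive_n (fun x2 =>
      Derive_n (fun x3 => f (mk3 x1 x2 x3)) (a3 a) (v3 v))
    (a2 a) (v2 v))
  (a1 a) (v1 v).

Definition Hermite (u : vec3) (T : R) (a : midx) (v : vec3) : R :=
  (-1) ^ (mabs a) * Rpower T (INR (mabs a) / 2) / Maxw u T v *
  dpart (Maxw u T) a v.

Definition binomZ (n : nat) (k : Z) : R :=
  if andb (0 <=? k)%Z (k <=? Z.of_nat n)%Z then Binomial.C n (Z.to_nat k) else 0.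

Definition c_term (r : R) (l k l' : nat) (s : Z) : R :=
  binomZ l s * binomZ k (Z.of_nat l' - s) *
  powerRZ (-1) (Z.of_nat k - Z.of_nat l' + s) *
  Rpower r ((INR l + INR l') / 2 - IZR s).

(* c^{l k}_{l' k'}(r); the sum over s in Z is restricted to 0 <= s <= l,
   outside of which C_l^s = 0 *)
Definition ccoef (r : R) (l k l' k' : nat) : R :=
  Rpower (1 + r) (- ((INR l' + INR k') / 2)) *
  sum_f_R0 (fun s => c_term r l k l' (Z.of_nat s)) l.

Definition zero3 : vec3 := mk3 0 0 0.

From Stdlib Require Import Reals ZArith Lra Lia.
From Coquelicot Require Import Coquelicot.
Open Scope R_scope.

(** Since the Maxwellian factorizes, Rodrigues' formula gives
    [H^{0,T}_α(v) = Π_d He_{α_d}(v_d / √T)] with the probabilists' Hermite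
    polynomials [He], and the identity splits into three one-dimensional ones.
    In one dimension, with [c = 1/√(1+r)], [s = √r/√(1+r)], [a = √(1+r) h] and
    [b = s g], the arguments are [v = c a + s b] and [w = s a - c b], a rotation
    of [(a, b)].  Writing [E_d(y) = Σ_m y_m He_m(a) He_{d-m}(b)], the recurrence
    [x He_n = He_{n+1} + n He_{n-1}] shows that multiplying [E_d(y)] by
    [α a + β b] multiplies the generating polynomial [Σ y_m X^m] by [α X + β]
    and adds a lowering term.  For a rotation the lowering term reproduces the
    three-term recurrence of [He], so [He_l(v) He_k(w) = E_{l+k}(y)] where [y]
    are the coefficients of [(c X + s)^l (s X - c)^k]; their binomial expansion
    is the sum defining [c^{l k}_{l' k'}(r)]. *)

(** * Hermite polynomials *)

Fixpoint He (n : nat) (x : R) : R :=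
  match n with
  | O => 1
  | S n' => match n' with
            | O => x
            | S n'' => x * He n' x - INR n' * He n'' x
            end
  end.

Definition hermite_rec (x : R) (u : nat -> R) : Prop :=
  forall n, u (S n) = x * u n - INR n * u (pred n).

Lemma hermite_rec_He x : hermite_rec x (fun n => He n x).
Proof. intros [|n]; simpl; [ring | reflexivity]. Qed.

Lemma He_succ n x : He (S n) x = x * He n x - INR n * He (pred n) x.
Proof. exact (hermite_rec_He x n). Qed.

Lemma x_mul_He m x : x * He m x = He (S m) x + INR m * He (pred m) x.
Proof. rewrite He_succ; ring. Qed.

Lemma hermite_rec_unique x u v :
  hermite_rec x u -> hermite_rec x v -> u 0%nat = v 0%nat -> forall n, u n = v n.
Proof.
  intros Hu Hv H0.
  enough (H : forall n, u n = v n /\ u (S n) = v (S n)) by (intros n; apply H).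
  induction n as [|n [IH1 IH2]].
  - split; [exact H0|]. rewrite Hu, Hv. simpl pred. rewrite H0. ring.
  - split; [exact IH2|]. rewrite Hu, Hv, IH2.
    destruct n; simpl pred; [rewrite H0 | rewrite IH1]; ring.
Qed.

Lemma is_derive_He n x : is_derive (He n) x (INR n * He (pred n) x).
Proof.
  enough (H : forall x, is_derive (He n) x (INR n * He (pred n) x) /\
                        is_derive (He (S n)) x (INR (S n) * He n x))
    by exact (proj1 (H x)).
  clear x; induction n as [|n IH]; intros x.
  - split; simpl; auto_derive; auto; ring.
  - split; [exact (proj2 (IH x))|].
    destruct (IH x) as [D1 D2].
    apply (is_derive_ext (fun t => t * He (S n) t - INR (S n) * He n t)); [reflexivity|].
    replace (INR (S (S n)) * He (S n) x) with
      (He (S n) x + x * (INR (S n) * He n x) - INR (S n) * (INR n * He (pred n) x))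
      by (rewrite He_succ; destruct n; simpl; ring).
    (* Abstracting [He n] and [He (S n)] keeps [auto_derive] from unfolding them. *)
    set (d1 := INR n * He (pred n) x) in *. set (d2 := INR (S n) * He n x) in *.
    clearbody d1 d2. revert D1 D2.
    generalize (INR (S n)) (He n) (He (S n)); intros c f g D1 D2.
    auto_derive.
    + split; [exists d2; exact D2|]. split; [exists d1; exact D1|]. exact I.
    + rewrite (is_derive_unique (fun y : R => f y) x d1 D1),
        (is_derive_unique (fun y : R => g y) x d2 D2).
      ring.
Qed.

(** * Products of Hermite polynomials under a rotation *)

(* A sequence [f : nat -> R] stands for the polynomial [Σ_m f m X^m]; then
   [mul_lin al be] multiplies it by [al X + be], and [lower al be D] is the
   operator [al ∂_X + be (D - X ∂_X)] on polynomials of degree at most [D]. *)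
Definition shift (f : nat -> R) (m : nat) : R :=
  match m with O => 0 | S m' => f m' end.

Definition delta (m : nat) : R := match m with O => 1 | _ => 0 end.

Lemma delta_support j : (0 < j)%nat -> delta j = 0.
Proof. destruct j; [lia | reflexivity]. Qed.

Definition mul_lin (al be : R) (f : nat -> R) (m : nat) : R :=
  al * shift f m + be * f m.

Definition lower (al be : R) (D : nat) (f : nat -> R) (m : nat) : R :=
  al * INR (S m) * f (S m) + be * (INR D - INR m) * f m.

Lemma mul_lin_ext al be f g m :
  (forall j, f j = g j) -> mul_lin al be f m = mul_lin al be g m.
Proof. intros H. unfold mul_lin, shift. destruct m; rewrite ?H; ring. Qed.

Lemma mul_lin_scal al be x f m :
  mul_lin al be (fun j => x * f j) m = x * mul_lin al be f m.
Proof. unfold mul_lin, shift. destruct m; ring. Qed.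

Lemma iter_mul_lin_support al be D f n m :
  (forall j, (D < j)%nat -> f j = 0) -> (n + D < m)%nat ->
  Nat.iter n (mul_lin al be) f m = 0.
Proof.
  intros Hf. revert m. induction n as [|n IH]; intros m Hm; simpl.
  - apply Hf; lia.
  - unfold mul_lin, shift. destruct m as [|m]; [lia|]. rewrite !IH by lia. ring.
Qed.

Lemma lower_mul_lin al be al' be' D f m :
  lower al be (S D) (mul_lin al' be' f) m =
  mul_lin al' be' (lower al be D f) m + (al * al' + be * be') * f m.
Proof.
  unfold lower, mul_lin, shift. destruct m; rewrite !S_INR; simpl; try rewrite S_INR; ring.
Qed.

Lemma lower_iter_mul_lin al be al' be' D f n m :
  (forall j, lower al be D f j = 0) ->
  lower al be (D + n) (Nat.iter n (mul_lin al' be') f) m =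
  (al * al' + be * be') * INR n * Nat.iter (pred n) (mul_lin al' be') f m.
Proof.
  intros Hf. revert m. induction n as [|n IH]; intros m.
  - simpl. rewrite Nat.add_0_r, Hf. ring.
  - simpl Nat.iter at 1.
    rewrite Nat.add_succ_r, lower_mul_lin, (mul_lin_ext _ _ _ _ _ IH), mul_lin_scal.
    destruct n as [|n]; simpl pred; simpl Nat.iter; rewrite ?S_INR; simpl INR; ring.
Qed.

Lemma lower_delta al be j : lower al be 0 delta j = 0.
Proof. unfold lower. destruct j; simpl; ring. Qed.

Definition bihermite (d : nat) (y : nat -> R) (a b : R) : R :=
  sum_f_R0 (fun m => y m * He m a * He (d - m) b) d.

Lemma bihermite_ext d y z a b :
  (forall m, (m <= d)%nat -> y m = z m) -> bihermite d y a b = bihermite d z a b.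
Proof. intros H. apply sum_eq; intros m Hm. rewrite H by exact Hm. reflexivity. Qed.

Lemma bihermite_lin d f g al be a b :
  bihermite d (fun m => al * f m + be * g m) a b =
  al * bihermite d f a b + be * bihermite d g a b.
Proof. unfold bihermite. rewrite !scal_sum, <- plus_sum. apply sum_eq; intros; ring. Qed.

Lemma bihermite_scal d y x a b :
  bihermite d (fun m => x * y m) a b = x * bihermite d y a b.
Proof. unfold bihermite. rewrite scal_sum. apply sum_eq; intros; ring. Qed.

Lemma bihermite_mul_fst d y a b :
  a * bihermite (S d) y a b =
  bihermite (S (S d)) (shift y) a b + bihermite d (fun m => INR (S m) * y (S m)) a b.
Proof.
  unfold bihermite. rewrite scal_sum.
  transitivity (sum_f_R0 (fun m => y m * He (S m) a * He (S d - m) b) (S d)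
    + sum_f_R0 (fun m => INR m * y m * He (pred m) a * He (S d - m) b) (S d)).
  { rewrite <- plus_sum. apply sum_eq; intros m _.
    replace (y m * He m a * He (S d - m) b * a) with (y m * (a * He m a) * He (S d - m) b) by ring.
    rewrite x_mul_He. ring. }
  f_equal.
  - rewrite (decomp_sum _ (S (S d))) by lia. cbn [shift Init.Nat.pred].
    rewrite !Rmult_0_l, Rplus_0_l. apply sum_eq; intros m _. reflexivity.
  - rewrite (decomp_sum _ (S d)) by lia. simpl INR at 1. rewrite !Rmult_0_l, Rplus_0_l.
    apply sum_eq; intros m _. reflexivity.
Qed.

Lemma bihermite_mul_snd d y a b : y (S (S d)) = 0 ->
  b * bihermite (S d) y a b =
  bihermite (S (S d)) y a b + bihermite d (fun m => (INR (S d) - INR m) * y m) a b.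
Proof.
  intros Hy. unfold bihermite. rewrite scal_sum.
  transitivity (sum_f_R0 (fun m => y m * He m a * He (S (S d - m)) b) (S d)
    + sum_f_R0 (fun m => INR (S d - m) * y m * He m a * He (pred (S d - m)) b) (S d)).
  { rewrite <- plus_sum. apply sum_eq; intros m _.
    replace (y m * He m a * He (S d - m) b * b) with (y m * He m a * (b * He (S d - m) b)) by ring.
    rewrite x_mul_He. ring. }
  f_equal.
  - rewrite (tech5 _ (S d)), Hy, Rmult_0_l, Rmult_0_l, Rplus_0_r.
    apply sum_eq; intros m Hm. replace (S (S d) - m)%nat with (S (S d - m)) by lia. reflexivity.
  - rewrite tech5, Nat.sub_diag. simpl INR at 2. rewrite !Rmult_0_l, Rplus_0_r.
    apply sum_eq; intros m Hm. rewrite minus_INR by lia.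
    replace (pred (S d - m)) with (d - m)%nat by lia. ring.
Qed.

Lemma bihermite_mul_lin al be d y a b : y (S d) = 0 ->
  (al * a + be * b) * bihermite d y a b =
  bihermite (S d) (mul_lin al be y) a b + bihermite (pred d) (lower al be d y) a b.
Proof.
  intros Hy. destruct d as [|d].
  - unfold bihermite, mul_lin, lower, shift. simpl. rewrite Hy. ring.
  - rewrite Rmult_plus_distr_r, !Rmult_assoc, bihermite_mul_fst, bihermite_mul_snd by exact Hy.
    unfold mul_lin. rewrite bihermite_lin. simpl pred.
    rewrite (bihermite_ext d (lower al be (S d) y)
      (fun m => al * (INR (S m) * y (S m)) + be * ((INR (S d) - INR m) * y m)))
      by (intros; unfold lower; ring).
    rewrite bihermite_lin. ring.
Qed.

(* When [al² + be² = 1] the lowering term of [bihermite_mul_lin] is [n] times the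
   previous iterate ([lower_iter_mul_lin]), which is exactly the Hermite recurrence. *)
Lemma hermite_rec_bihermite al be D f a b :
  al * al + be * be = 1 ->
  (forall j, (D < j)%nat -> f j = 0) -> (forall j, lower al be D f j = 0) ->
  hermite_rec (al * a + be * b)
    (fun n => bihermite (D + n) (Nat.iter n (mul_lin al be) f) a b).
Proof.
  intros Hunit Hsupp Hlow n.
  rewrite Nat.add_succ_r, bihermite_mul_lin by (apply (iter_mul_lin_support _ _ D); auto; lia).
  rewrite (bihermite_ext _ (lower al be (D + n) (Nat.iter n (mul_lin al be) f))
    (fun m => INR n * Nat.iter (pred n) (mul_lin al be) f m))
    by (intros; rewrite lower_iter_mul_lin, Hunit by exact Hlow; ring).
  rewrite bihermite_scal. destruct n as [|n]; [simpl INR | rewrite Nat.add_succ_r]; simpl; ring.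
Qed.

(* The coefficients of [(c X + s)^l (s X - c)^k]. *)
Definition rot_coef (c s : R) (l k : nat) : nat -> R :=
  Nat.iter l (mul_lin c s) (Nat.iter k (mul_lin s (- c)) delta).

Lemma He_rotation c s a b l k : c * c + s * s = 1 ->
  He l (c * a + s * b) * He k (s * a - c * b) = bihermite (l + k) (rot_coef c s l k) a b.
Proof.
  intros Hcs.
  assert (Hsnd : forall k, He k (s * a - c * b) = bihermite k (rot_coef c s 0 k) a b).
  { apply (hermite_rec_unique (s * a + - c * b)).
    - replace (s * a + - c * b) with (s * a - c * b) by ring. apply hermite_rec_He.
    - apply (hermite_rec_bihermite _ _ 0); [lra | exact delta_support | apply lower_delta].
    - unfold bihermite. simpl. ring. }
  rewrite (Nat.add_comm l k). revert l.
  apply (hermite_rec_unique (c * a + s * b)).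
  - intros n. rewrite He_succ. ring.
  - apply (hermite_rec_bihermite _ _ k); [exact Hcs | |].
    + intros j Hj. apply (iter_mul_lin_support _ _ 0); [exact delta_support | lia].
    + intros j. rewrite <- (Nat.add_0_l k) at 1.
      rewrite lower_iter_mul_lin by apply lower_delta. ring.
  - rewrite Nat.add_0_r, Hsnd. simpl He. ring.
Qed.

(** * The coefficients [c^{l k}_{l' k'}(r)] *)

(* Unlike [Binomial.C n k], [binom n k] vanishes for [k > n]. *)
Fixpoint binom (n k : nat) : R :=
  match n, k with
  | O, O => 1
  | O, S _ => 0
  | S _, O => 1
  | S n', S k' => binom n' k' + binom n' (S k')
  end.

Lemma binom_gt n k : (n < k)%nat -> binom n k = 0.
Proof.
  revert k; induction n as [|n IH]; intros [|k] Hk; simpl; try lia; auto.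
  rewrite !IH by lia. ring.
Qed.

Lemma binom_C n k : (k <= n)%nat -> binom n k = Binomial.C n k.
Proof.
  assert (C0 : forall n, Binomial.C n 0 = 1).
  { intros m. unfold Binomial.C. rewrite Nat.sub_0_r. simpl. field. apply INR_fact_neq_0. }
  revert k; induction n as [|n IH]; intros [|k] Hk; simpl; try lia; rewrite ?C0; auto.
  destruct (Nat.eq_dec k n) as [->|Hkn].
  - rewrite (binom_gt n (S n)), IH, (pascal_step1 (S n) (S n)), (pascal_step1 n n),
      !Nat.sub_diag, !C0 by lia.
    ring.
  - rewrite !IH by lia. apply pascal. lia.
Qed.

Lemma iter_mul_lin_delta al be n j :
  Nat.iter n (mul_lin al be) delta j = binom n j * al ^ j * be ^ (n - j).
Proof.
  revert j; induction n as [|n IH]; intros j; simpl Nat.iter.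
  - destruct j; simpl; ring.
  - unfold mul_lin, shift. destruct j as [|j]; rewrite !IH.
    + destruct n; simpl; ring.
    + simpl binom. destruct (Nat.lt_ge_cases j n).
      * replace (S n - S j)%nat with (S (n - S j)) by lia.
        replace (n - j)%nat with (S (n - S j)) by lia. simpl pow. ring.
      * rewrite (binom_gt n (S j)) by lia. simpl pow. ring.
Qed.

Definition shift_by (i : nat) (z : nat -> R) (m : nat) : R :=
  if (i <=? m)%nat then z (m - i)%nat else 0.

Lemma iter_mul_lin_conv al be n z m :
  Nat.iter n (mul_lin al be) z m =
  sum_f_R0 (fun i => Nat.iter n (mul_lin al be) delta i * shift_by i z m) n.
Proof.
  revert m; induction n as [|n IH]; intros m.
  - unfold shift_by. simpl. rewrite Nat.sub_0_r. ring.
  - simpl Nat.iter. set (B := Nat.iter n (mul_lin al be) delta).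
    transitivity (al * sum_f_R0 (fun i => shift B i * shift_by i z m) (S n)
                  + be * sum_f_R0 (fun i => B i * shift_by i z m) (S n)).
    2:{ rewrite !scal_sum, <- plus_sum. apply sum_eq; intros. unfold mul_lin. ring. }
    unfold mul_lin. f_equal; f_equal.
    + rewrite decomp_sum by lia. cbn [shift Init.Nat.pred]. rewrite Rmult_0_l, Rplus_0_l.
      destruct m as [|m].
      * symmetry. apply sum_eq_R0. intros i _. unfold shift_by. simpl. ring.
      * apply IH.
    + assert (HB : B (S n) = 0)
        by (apply (iter_mul_lin_support _ _ 0); [exact delta_support | lia]).
      rewrite tech5, HB, Rmult_0_l, Rplus_0_r. apply IH.
Qed.

Lemma rot_coef_closed c s l k m :
  rot_coef c s l k m =
  sum_f_R0 (fun i => binom l i * c ^ i * s ^ (l - i) *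
    shift_by i (fun j => binom k j * s ^ j * (- c) ^ (k - j)) m) l.
Proof.
  unfold rot_coef. rewrite iter_mul_lin_conv. apply sum_eq; intros i _.
  rewrite iter_mul_lin_delta. unfold shift_by. destruct (i <=? m)%nat; [|reflexivity].
  rewrite iter_mul_lin_delta. reflexivity.
Qed.

Lemma binomZ_of_nat n j : binomZ n (Z.of_nat j) = binom n j.
Proof.
  unfold binomZ. replace (0 <=? Z.of_nat j)%Z with true by (symmetry; apply Z.leb_le; lia).
  destruct (Nat.le_gt_cases j n) as [Hj|Hj].
  - replace (Z.of_nat j <=? Z.of_nat n)%Z with true by (symmetry; apply Z.leb_le; lia).
    rewrite Nat2Z.id, binom_C by exact Hj. reflexivity.
  - replace (Z.of_nat j <=? Z.of_nat n)%Z with false by (symmetry; apply Z.leb_gt; lia).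
    rewrite binom_gt by exact Hj. reflexivity.
Qed.

Lemma binomZ_neg n z : (z < 0)%Z -> binomZ n z = 0.
Proof.
  intros Hz. unfold binomZ.
  replace (0 <=? z)%Z with false by (symmetry; apply Z.leb_gt; lia). reflexivity.
Qed.

Lemma pow_sqrt x n : 0 < x -> sqrt x ^ n = Rpower x (INR n / 2).
Proof.
  intros Hx. rewrite <- Rpower_sqrt, <- Rpower_pow by (auto; apply exp_pos).
  rewrite Rpower_mult. f_equal. field.
Qed.

Lemma ccoef_rot_coef r l k m : 0 < r -> (m <= l + k)%nat ->
  ccoef r l k m (l + k - m) = rot_coef (/ sqrt (1 + r)) (sqrt r / sqrt (1 + r)) l k m.
Proof.
  intros hr Hm. unfold ccoef. rewrite rot_coef_closed, scal_sum.
  apply sum_eq; intros i Hi. unfold c_term, shift_by. rewrite binomZ_of_nat.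
  destruct (Nat.leb_spec i m) as [Him|Hmi]; [|rewrite binomZ_neg by lia; ring].
  replace (Z.of_nat m - Z.of_nat i)%Z with (Z.of_nat (m - i)) by lia.
  rewrite binomZ_of_nat.
  destruct (Nat.le_gt_cases (m - i) k) as [Hk|Hk]; [|rewrite (binom_gt k) by exact Hk; ring].
  replace (Z.of_nat k - Z.of_nat m + Z.of_nat i)%Z with (Z.of_nat (k - (m - i))) by lia.
  rewrite <- pow_powerRZ, <- INR_IZR_INZ.
  replace (- (/ sqrt (1 + r))) with (-1 * / sqrt (1 + r)) by ring.
  change (sqrt r / sqrt (1 + r)) with (sqrt r * / sqrt (1 + r)).
  rewrite !Rpow_mult_distr, !pow_inv, !pow_sqrt by lra.
  rewrite <- !Rpower_Ropp.
  replace (Rpower r ((INR l + INR m) / 2 - INR i))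
    with (Rpower r (INR (l - i) / 2) * Rpower r (INR (m - i) / 2))
    by (rewrite <- Rpower_plus; f_equal; rewrite !minus_INR by lia; field).
  replace (Rpower (1 + r) (- ((INR m + INR (l + k - m)) / 2)))
    with (Rpower (1 + r) (- (INR i / 2)) * Rpower (1 + r) (- (INR (l - i) / 2)) *
          Rpower (1 + r) (- (INR (m - i) / 2)) * Rpower (1 + r) (- (INR (k - (m - i)) / 2)))
    by (rewrite <- !Rpower_plus; f_equal; rewrite !minus_INR, plus_INR by lia; field).
  ring.
Qed.

Lemma He_pair_expansion r l k x y : 0 < r ->
  He l (x + r / (1 + r) * y) * He k (sqrt r * x - sqrt r / (1 + r) * y) =
  sum_f_R0 (fun j => ccoef r l k j (l + k - j) *
    He j (sqrt (1 + r) * x) * He (l + k - j) (sqrt (r / (1 + r)) * y)) (l + k).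
Proof.
  intros hr.
  assert (Hq : sqrt (1 + r) * sqrt (1 + r) = 1 + r) by (apply sqrt_sqrt; lra).
  assert (Hp : sqrt r * sqrt r = r) by (apply sqrt_sqrt; lra).
  assert (q_pos : 0 < sqrt (1 + r)) by (apply sqrt_lt_R0; lra).
  rewrite sqrt_div_alt by lra.
  set (c := / sqrt (1 + r)). set (s := sqrt r / sqrt (1 + r)).
  assert (Hss : s * s = r / (1 + r)).
  { transitivity (sqrt r * sqrt r / (sqrt (1 + r) * sqrt (1 + r))); [unfold s; field; lra|].
    rewrite Hp, Hq. reflexivity. }
  assert (Hcs_prod : c * s = sqrt r / (1 + r)).
  { rewrite <- Hq. unfold c, s. field. lra. }
  assert (Hcs : c * c + s * s = 1).
  { rewrite Hss. unfold c. rewrite <- Rinv_mult, Hq. field. lra. }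
  replace (x + r / (1 + r) * y) with (c * (sqrt (1 + r) * x) + s * (s * y))
    by (rewrite <- Hss; unfold c; field; lra).
  replace (sqrt r * x - sqrt r / (1 + r) * y) with (s * (sqrt (1 + r) * x) - c * (s * y))
    by (rewrite <- Hcs_prod; unfold c, s; field; lra).
  rewrite He_rotation by exact Hcs. apply sum_eq; intros j Hj.
  unfold c, s. rewrite ccoef_rot_coef by (auto; lia). ring.
Qed.

(** * Hermite polynomials of the Maxwellian *)

Definition gauss (T x : R) : R := exp (- x ^ 2 / (2 * T)).

Lemma Derive_n_gauss T n x : 0 < T ->
  Derive_n (gauss T) n x = (- / sqrt T) ^ n * He n (x / sqrt T) * gauss T x.
Proof.
  intros hT. revert x; induction n as [|n IH]; intros x; [simpl; ring|].
  simpl Derive_n.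
  rewrite (Derive_ext _ (fun t => (- / sqrt T) ^ n * (He n (t / sqrt T) * gauss T t)))
    by (intros; rewrite IH; ring).
  apply is_derive_unique. unfold gauss. auto_derive.
  - exists (INR n * He (pred n) (x * / sqrt T)). apply is_derive_He.
  - rewrite (is_derive_unique (fun y : R => He n y) _ _ (is_derive_He n _)), He_succ.
    assert (q_pos : 0 < sqrt T) by (apply sqrt_lt_R0; lra).
    assert (HqT : sqrt T * sqrt T = T) by (apply sqrt_sqrt; lra).
    set (q := sqrt T) in *. clearbody q. subst T.
    unfold Rdiv. replace (x * (x * 1)) with (x ^ 2) by ring.
    rewrite <- (tech_pow_Rmult (- / q) n). field. lra.
Qed.

Lemma dpart_prod F f1 f2 f3 a v :
  (forall x1 x2 x3, F (mk3 x1 x2 x3) = f1 x1 * f2 x2 * f3 x3) ->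
  dpart F a v =
  Derive_n f1 (a1 a) (v1 v) * Derive_n f2 (a2 a) (v2 v) * Derive_n f3 (a3 a) (v3 v).
Proof.
  intros HF. unfold dpart.
  set (d2 := Derive_n f2 (a2 a) (v2 v)). set (d3 := Derive_n f3 (a3 a) (v3 v)).
  rewrite (Derive_n_ext _ (fun x1 => (d3 * d2) * f1 x1)), Derive_n_scal_l; [ring|].
  intros x1. rewrite (Derive_n_ext _ (fun x2 => (f1 x1 * d3) * f2 x2)), Derive_n_scal_l.
  - unfold d2. ring.
  - intros x2. rewrite (Derive_n_ext _ (fun x3 => (f1 x1 * f2 x2) * f3 x3)), Derive_n_scal_l.
    + unfold d3. ring.
    + intros x3. apply HF.
Qed.

Lemma Maxw_zero3 T x1 x2 x3 : 0 < T ->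
  Maxw zero3 T (mk3 x1 x2 x3) =
  Rpower (2 * PI * T) (- (3 / 2)) * gauss T x1 * gauss T x2 * gauss T x3.
Proof.
  intros hT. unfold Maxw, gauss, vnorm2, vadd, vscal, zero3, mk3, v1, v2, v3; simpl.
  rewrite !Rmult_assoc, <- !exp_plus. do 2 f_equal. field. lra.
Qed.

Lemma pow_opp_inv q n : q <> 0 -> (- / q) ^ n = / ((-1) ^ n * q ^ n).
Proof. intros Hq. rewrite <- Rpow_mult_distr, <- pow_inv. f_equal. field. exact Hq. Qed.

Lemma Hermite_zero3 T a v : 0 < T ->
  Hermite zero3 T a v =
  He (a1 a) (v1 v / sqrt T) * He (a2 a) (v2 v / sqrt T) * He (a3 a) (v3 v / sqrt T).
Proof.
  intros hT. set (K := Rpower (2 * PI * T) (- (3 / 2))). unfold Hermite.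
  rewrite (dpart_prod _ (fun x => K * gauss T x) (gauss T) (gauss T))
    by (intros; rewrite Maxw_zero3 by exact hT; reflexivity).
  rewrite Derive_n_scal_l, !Derive_n_gauss by exact hT.
  destruct v as [[x1 x2] x3]. change (x1, x2, x3) with (mk3 x1 x2 x3).
  rewrite Maxw_zero3 by exact hT. fold K.
  assert (q_pos : 0 < sqrt T) by (apply sqrt_lt_R0; lra).
  unfold mabs. rewrite <- pow_sqrt, !pow_add, !pow_opp_inv by lra.
  assert (K_pos : 0 < K) by apply exp_pos.
  assert (g_pos : forall x, 0 < gauss T x) by (intros; apply exp_pos).
  assert (sign_nz : forall n, (-1) ^ n <> 0) by (intros; apply pow_nonzero; lra).
  assert (q_nz : forall n, sqrt T ^ n <> 0) by (intros; apply pow_nonzero; lra).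
  unfold v1, v2, v3, mk3; simpl.
  field. repeat split; (apply Rgt_not_eq; apply g_pos) || apply sign_nz || apply q_nz || lra.
Qed.

Lemma sum_f_R0_prod3 F G H n1 n2 n3 :
  sum_f_R0 F n1 * sum_f_R0 G n2 * sum_f_R0 H n3 =
  sum_f_R0 (fun i => sum_f_R0 (fun j => sum_f_R0 (fun k => F i * G j * H k) n3) n2) n1.
Proof.
  rewrite Rmult_assoc, Rmult_comm, scal_sum. apply sum_eq; intros i _.
  rewrite Rmult_comm, Rmult_assoc, Rmult_comm, scal_sum. apply sum_eq; intros j _.
  rewrite Rmult_comm, Rmult_assoc, Rmult_comm, scal_sum. apply sum_eq; intros k _. ring.
Qed.

(* The sum over kappa' + lambda' = kappa + lambda is parametrized by
   lambda' = (l1', l2', l3') with 0 <= l_d' <= l_d + k_d and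
   k_d' = l_d + k_d - l_d'. *)
Theorem lemma1 (r Tb : R) (hr : 0 < r) (hT : 0 < Tb)
  (h g : vec3) (lam kap : midx) :
  let v := vadd h (vscal (r / (1 + r)) g) in
  let w := vadd (vscal (sqrt r) h) (vscal (- (sqrt r / (1 + r))) g) in
  Hermite zero3 Tb lam v * Hermite zero3 Tb kap w =
  sum_f_R0 (fun l1' =>
  sum_f_R0 (fun l2' =>
  sum_f_R0 (fun l3' =>
    let k1' := (a1 lam + a1 kap - l1')%nat in
    let k2' := (a2 lam + a2 kap - l2')%nat in
    let k3' := (a3 lam + a3 kap - l3')%nat in
    ccoef r (a1 lam) (a1 kap) l1' k1' *
    ccoef r (a2 lam) (a2 kap) l2' k2' *
    ccoef r (a3 lam) (a3 kap) l3' k3' *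
    Hermite zero3 Tb (l1', l2', l3') (vscal (sqrt (1 + r)) h) *
    Hermite zero3 Tb (k1', k2', k3') (vscal (sqrt (r / (1 + r))) g))
  (a3 lam + a3 kap)%nat)
  (a2 lam + a2 kap)%nat)
  (a1 lam + a1 kap)%nat.
Proof.
  cbv zeta.
  set (P := fun (l k : nat) (x y : R) (j : nat) =>
    ccoef r l k j (l + k - j) * He j (sqrt (1 + r) * x / sqrt Tb) *
    He (l + k - j) (sqrt (r / (1 + r)) * y / sqrt Tb)).
  assert (He_pair : forall l k x y,
    He l ((x + r / (1 + r) * y) / sqrt Tb) *
    He k ((sqrt r * x + - (sqrt r / (1 + r)) * y) / sqrt Tb) = sum_f_R0 (P l k x y) (l + k)).
  { intros l k x y. assert (q_pos : 0 < sqrt Tb) by (apply sqrt_lt_R0; lra).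
    replace ((x + r / (1 + r) * y) / sqrt Tb)
      with (x / sqrt Tb + r / (1 + r) * (y / sqrt Tb)) by (field; lra).
    replace ((sqrt r * x + - (sqrt r / (1 + r)) * y) / sqrt Tb)
      with (sqrt r * (x / sqrt Tb) - sqrt r / (1 + r) * (y / sqrt Tb)) by (field; lra).
    rewrite He_pair_expansion by exact hr. unfold P. rewrite !Rmult_div_assoc. reflexivity. }
  transitivity (sum_f_R0 (P (a1 lam) (a1 kap) (v1 h) (v1 g)) (a1 lam + a1 kap) *
                sum_f_R0 (P (a2 lam) (a2 kap) (v2 h) (v2 g)) (a2 lam + a2 kap) *
                sum_f_R0 (P (a3 lam) (a3 kap) (v3 h) (v3 g)) (a3 lam + a3 kap)).
  - rewrite !Hermite_zero3, <- !He_pair by exact hT.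
    unfold vadd, vscal, mk3, v1, v2, v3; simpl. ring.
  - rewrite sum_f_R0_prod3.
    apply sum_eq; intros i _; apply sum_eq; intros j _; apply sum_eq; intros k _.
    unfold P. rewrite !Hermite_zero3 by exact hT.
    unfold vscal, mk3, v1, v2, v3, a1, a2, a3; simpl. ring.
Qed.
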